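(* Let $\alpha\in[0,\pi/2)$, $A\in\Pi^n_{s,\alpha}$ and $q\in\mathbb{C}$ with $0<|q|\le1$. Then \[ \frac{|q|^2\cos^2\alpha}{2}\|A^*A+AA^*\|\le w_q^2(A)\le\left(\sqrt{(1-|q|^2)(1+2\sin^2(\alpha))}+|q|\right)^2\frac{\|A^*A+AA^*\|}{2}. \]
   Context: $M_n$ is the algebra of complex $n\times n$ matrices with the operator norm $\|\cdot\|$. For $|q|\le1$, $w_q(A)=\sup\{|\langle Ax,y\rangle|: \|x\|=\|y\|=1,\ \langle x,y\rangle=q\}$. $W(A)=\{\langle Ax,x\rangle:\|x\|=1\}$, $S_\alpha=\{z:\operatorname{Re}z>0,\ |\operatorname{Im}z|\le\tan(\alpha)\operatorname{Re}z\}$ and $\Pi^n_{s,\alpha}=\{A\in M_n: W(A)\subseteq S_\alpha\}$. *)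

From HB Require Import structures.
From mathcomp Require Import all_boot all_order all_algebra.
From mathcomp Require Import all_classical all_reals.
From mathcomp Require Import trigo.
From mathcomp Require Import complex.
Set Implicit Arguments. Unset Strict Implicit. Unset Printing Implicit Defensive.
Import Order.TTheory GRing.Theory Num.Theory.
Local Open Scope ring_scope.
Local Open Scope classical_set_scope.

Section Defs.
Variable R : realType.
Local Notation C := R[i].

Definition cabs (z : C) : R := Num.sqrt (complex.Re z ^+ 2 + complex.Im z ^+ 2).

Definition inner n (x y : 'cV[C]_n) : C := \sum_(i < n) x i 0 * conjc (y i 0).

Definition vnorm n (x : 'cV[C]_n) : R := Num.sqrt (complex.Re (inner x x)).

Definition adjmx n (A : 'M[C]_n) : 'M[C]_n := (map_mx (@conjc R) A)^T.

Definition opnorm n (A : 'M[C]_n) : R :=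
  sup [set vnorm (A *m x) | x in [set x : 'cV[C]_n | vnorm x = 1]].

Definition wq n (q : C) (A : 'M[C]_n) : R :=
  sup [set r | exists x y : 'cV[C]_n,
     [/\ vnorm x = 1, vnorm y = 1, inner x y = q & r = cabs (inner (A *m x) y)]].

Definition numrange n (A : 'M[C]_n) : set C :=
  [set inner (A *m x) x | x in [set x : 'cV[C]_n | vnorm x = 1]].

Definition sector (alpha : R) : set C :=
  [set z | 0 < complex.Re z /\ `|complex.Im z| <= tan alpha * complex.Re z].

Definition Pi_s (n : nat) (alpha : R) : set 'M[C]_n :=
  [set A | numrange A `<=` sector alpha].
End Defs.

(* Write A = H + iK with H = (A + A^* )/2 and K = (A - A^* )/(2i) selfadjoint.
   Then A^*A + AA^* = 2 (H^2 + K^2), and A in Pi_{s,alpha} means that H >= 0 and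
   |<Kx,x>| <= tan alpha <Hx,x>.

   Lower bound: completing a unit x by a vector z orthogonal to it (possible
   when n > 1, and unnecessary when |q| = 1) gives unit vectors
   y = conj(q) x +- z with <x,y> = q, hence |q| |<Ax,x>| <= w_q(A).  So
   <Hx,x> <= w_q(A)/|q| for unit x, and by polarization ||H|| <= w_q(A)/|q|,
   ||K|| <= tan alpha w_q(A)/|q|, ||A^*A + AA^*|| <= 2 w_q(A)^2 / (|q| cos alpha)^2.

   Upper bound: <Ax,y> = q <Ax,x> + <Ax, y - conj(q) x> with
   ||y - conj(q) x||^2 = 1 - |q|^2.  With r^2 = ||A^*A + AA^*||/2 we have
   |<Ax,x>|^2 <= ||Hx||^2 + ||Kx||^2 <= r^2, and Cauchy-Schwarz for the positive
   forms H and tan alpha H +- K gives ||Hx||^2 <= <Hx,x> r,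
   ||Kx||^2 <= tan^2 alpha <Hx,x> r and a bound on Re <Hx, iKx>; an elementary
   optimisation then yields ||Ax||^2 <= (1 + 2 sin^2 alpha) r^2. *)

From HB Require Import structures.
From mathcomp Require Import all_boot all_order all_algebra.
From mathcomp Require Import all_classical all_reals.
From mathcomp Require Import trigo.
From mathcomp Require Import complex.
From mathcomp Require Import ring lra.
Set Implicit Arguments. Unset Strict Implicit. Unset Printing Implicit Defensive.
Import Order.TTheory GRing.Theory Num.Theory.
Local Open Scope ring_scope.
Local Open Scope classical_set_scope.
Local Open Scope complex_scope.

Local Notation Re := (@complex.Re _).
Local Notation Im := (@complex.Im _).

Section ComplexArith.
Variable R : realType.
Local Notation C := R[i].
Implicit Types (a : R) (x y z : C).

Lemma ReD x y : Re (x + y) = Re x + Re y. Proof. by case: x; case: y. Qed.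
Lemma ImD x y : Im (x + y) = Im x + Im y. Proof. by case: x; case: y. Qed.
Lemma ReN x : Re (- x) = - Re x. Proof. by case: x. Qed.
Lemma ImN x : Im (- x) = - Im x. Proof. by case: x. Qed.
Lemma ReB x y : Re (x - y) = Re x - Re y. Proof. by rewrite ReD ReN. Qed.
Lemma ImB x y : Im (x - y) = Im x - Im y. Proof. by rewrite ImD ImN. Qed.
Lemma ReM x y : Re (x * y) = Re x * Re y - Im x * Im y. Proof. by case: x; case: y. Qed.
Lemma ImM x y : Im (x * y) = Re x * Im y + Im x * Re y. Proof. by case: x; case: y. Qed.
Lemma ReJ x : Re (conjc x) = Re x. Proof. by case: x. Qed.
Lemma ImJ x : Im (conjc x) = - Im x. Proof. by case: x. Qed.

Definition ReImE := (ReD, ReB, ReN, ImD, ImB, ImN, ReM, ImM, ReJ, ImJ).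

Lemma complexP x y : Re x = Re y -> Im x = Im y -> x = y.
Proof. by case: x => a b; case: y => c d /= -> ->. Qed.

Lemma conjcD x y : conjc (x + y) = conjc x + conjc y.
Proof. by apply: complexP; rewrite !ReImE; ring. Qed.
Lemma conjcN x : conjc (- x) = - conjc x.
Proof. by apply: complexP; rewrite !ReImE; ring. Qed.
Lemma conjcM x y : conjc (x * y) = conjc x * conjc y.
Proof. by apply: complexP; rewrite !ReImE; ring. Qed.

Lemma Re_realM a z : Re (a%:C * z) = a * Re z.
Proof. by rewrite ReM /= mul0r subr0. Qed.
Lemma Im_realM a z : Im (a%:C * z) = a * Im z.
Proof. by rewrite ImM /= mul0r addr0. Qed.

Definition cabs2 z : R := Re z ^+ 2 + Im z ^+ 2.

Lemma cabs2_ge0 z : 0 <= cabs2 z.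
Proof. by rewrite addr_ge0 ?sqr_ge0. Qed.
Lemma cabs_ge0 z : 0 <= cabs z.
Proof. exact: sqrtr_ge0. Qed.
Lemma cabs_sqr z : cabs z ^+ 2 = cabs2 z.
Proof. by rewrite sqr_sqrtr // cabs2_ge0. Qed.
Lemma cabs2M x y : cabs2 (x * y) = cabs2 x * cabs2 y.
Proof. by rewrite /cabs2 ReM ImM; ring. Qed.
Lemma cabs2J z : cabs2 (conjc z) = cabs2 z.
Proof. by rewrite /cabs2 ReJ ImJ sqrrN. Qed.
Lemma cabs2_real a : cabs2 a%:C = a ^+ 2.
Proof. by rewrite /cabs2 /= expr0n addr0. Qed.
Lemma cabs2_i : cabs2 'i = 1.
Proof. by rewrite /cabs2 /= expr0n add0r expr1n. Qed.
Lemma cabs2_eq0 z : cabs2 z = 0 -> z = 0.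
Proof.
rewrite /cabs2 => z0; have Re2 := sqr_ge0 (Re z); have Im2 := sqr_ge0 (Im z).
by apply: complexP => /=; apply/eqP; rewrite -sqrf_eq0; apply/eqP; lra.
Qed.
Lemma cabs_real a : cabs a%:C = `|a|.
Proof. by rewrite /cabs -/(cabs2 _) cabs2_real sqrtr_sqr. Qed.

Lemma cabs_normc z : cabs z = ComplexField.Normc.normc z.
Proof. by case: z. Qed.
Lemma cabsM x y : cabs (x * y) = cabs x * cabs y.
Proof. by rewrite !cabs_normc ComplexField.Normc.normcM. Qed.
Lemma cabsD x y : cabs (x + y) <= cabs x + cabs y.
Proof. by rewrite !cabs_normc le_normcD. Qed.

Lemma Re_le_cabs z : Re z <= cabs z.
Proof.
apply: le_trans (ler_norm _) _.
by rewrite -sqrtr_sqr ler_sqrt ?cabs2_ge0 // lerDl sqr_ge0.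
Qed.

End ComplexArith.

Section InnerProduct.
Variables (R : realType) (n : nat).
Local Notation C := R[i].
Local Notation V := 'cV[C]_n.
Local Notation M := 'M[C]_n.
Implicit Types (a : C) (x y z : V) (A B : M).

Lemma innerDl x y z : inner (x + y) z = inner x z + inner y z.
Proof. by rewrite /inner -big_split; apply: eq_bigr => i _; rewrite mxE mulrDl. Qed.
Lemma innerZl a x z : inner (a *: x) z = a * inner x z.
Proof. by rewrite /inner mulr_sumr; apply: eq_bigr => i _; rewrite mxE mulrA. Qed.
Lemma innerBl x y z : inner (x - y) z = inner x z - inner y z.
Proof. by rewrite -scaleN1r innerDl innerZl mulN1r. Qed.
Lemma innerJ x y : conjc (inner x y) = inner y x.
Proof.
rewrite /inner (big_morph _ (@conjcD R) (@conjc0 R)); apply: eq_bigr => i _.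
by rewrite conjcM conjcK mulrC.
Qed.
Lemma innerDr x y z : inner z (x + y) = inner z x + inner z y.
Proof. by rewrite -innerJ innerDl conjcD !innerJ. Qed.
Lemma innerZr a x z : inner z (a *: x) = conjc a * inner z x.
Proof. by rewrite -innerJ innerZl conjcM innerJ. Qed.
Lemma innerBr x y z : inner z (x - y) = inner z x - inner z y.
Proof. by rewrite -innerJ innerBl conjcD conjcN !innerJ. Qed.
Lemma innerNr x z : inner z (- x) = - inner z x.
Proof. by rewrite -innerJ -scaleN1r innerZl mulN1r conjcN innerJ. Qed.
Lemma inner0l z : inner 0 z = 0.
Proof. by rewrite -(scale0r (0 : V)) innerZl mul0r. Qed.
Lemma inner0r z : inner z 0 = 0.
Proof. by rewrite -innerJ inner0l conjc0. Qed.

Lemma adjmxK A : adjmx (adjmx A) = A.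
Proof. by apply/matrixP => i j; rewrite !mxE conjcK. Qed.
Lemma inner_adjmx A x y : inner (A *m x) y = inner x (adjmx A *m y).
Proof.
rewrite /inner; under eq_bigr => i _ do rewrite mxE mulr_suml.
rewrite exchange_big /=; apply: eq_bigr => j _.
rewrite mxE (big_morph _ (@conjcD R) (@conjc0 R)) mulr_sumr.
apply: eq_bigr => i _; by rewrite !mxE conjcM conjcK mulrCA mulrA.
Qed.
Lemma inner_adjmxl A x y : inner (adjmx A *m x) y = inner x (A *m y).
Proof. by rewrite inner_adjmx adjmxK. Qed.

Definition vnorm2 x : R := Re (inner x x).

Lemma vnorm2E x : vnorm2 x = \sum_i cabs2 (x i 0).
Proof.
rewrite /vnorm2 /inner (big_morph _ (@ReD R) (erefl : Re 0 = 0)); apply: eq_bigr => i _.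
by rewrite ReM ReJ ImJ /cabs2; ring.
Qed.
Lemma inner_xx x : inner x x = (vnorm2 x)%:C.
Proof.
apply: complexP => //=; rewrite /inner (big_morph _ (@ImD R) (erefl : Im 0 = 0)).
by rewrite big1 // => i _; rewrite ImM ReJ ImJ; ring.
Qed.
Lemma vnorm2_ge0 x : 0 <= vnorm2 x.
Proof. by rewrite vnorm2E sumr_ge0 // => i _; apply: cabs2_ge0. Qed.
Lemma vnorm2_eq0 x : vnorm2 x = 0 -> x = 0.
Proof.
rewrite vnorm2E => /eqP; rewrite psumr_eq0 => [/allP h|i _]; last exact: cabs2_ge0.
apply/matrixP => i j; rewrite (ord1 j) mxE.
by apply: cabs2_eq0; apply/eqP; apply: h; rewrite mem_index_enum.
Qed.
Lemma vnorm2_0 : vnorm2 0 = 0.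
Proof. by rewrite /vnorm2 inner0l. Qed.
Lemma vnorm_eq1 x : vnorm x = 1 <-> vnorm2 x = 1.
Proof.
split=> [h|h]; last by rewrite /vnorm -/(vnorm2 x) h sqrtr1.
by rewrite -(sqr_sqrtr (vnorm2_ge0 x)) [Num.sqrt _]h expr1n.
Qed.
Lemma vnorm2Z a x : vnorm2 (a *: x) = cabs2 a * vnorm2 x.
Proof.
by rewrite /vnorm2 innerZl innerZr inner_xx mulrA !ReImE /= /cabs2; ring.
Qed.
Lemma vnorm2N x : vnorm2 (- x) = vnorm2 x.
Proof. by rewrite -scaleN1r vnorm2Z /cabs2 ReN ImN /=; ring. Qed.
Lemma vnorm2D x y : vnorm2 (x + y) = vnorm2 x + vnorm2 y + 2 * Re (inner x y).
Proof. by rewrite /vnorm2 innerDl !innerDr !ReD -[inner y x]innerJ ReJ; ring. Qed.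
Lemma vnorm2B x y : vnorm2 (x - y) = vnorm2 x + vnorm2 y - 2 * Re (inner x y).
Proof. by rewrite /vnorm2 innerBl !innerBr !ReB -[inner y x]innerJ ReJ; ring. Qed.

Lemma vec_eq0_or_scaled_unit y :
  y = 0 \/ exists s u, [/\ 0 < s, vnorm2 u = 1 & y = s%:C *: u].
Proof.
have [/vnorm2_eq0|ny] := eqVneq (vnorm2 y) 0; first by left.
have s_gt0 : 0 < Num.sqrt (vnorm2 y) by rewrite sqrtr_gt0 lt_def ny vnorm2_ge0.
right; exists (Num.sqrt (vnorm2 y)), ((Num.sqrt (vnorm2 y))^-1%:C *: y); split=> //.
  by rewrite vnorm2Z cabs2_real exprVn sqr_sqrtr ?vnorm2_ge0 // mulVf.
by rewrite scalerA -rmorphM /= mulfV ?gt_eqF // scale1r.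
Qed.

Lemma le_vnorm2_of_unit (f : V -> R) (k : R) :
  (forall (s : R) y, f (s%:C *: y) = s ^+ 2 * f y) ->
  (forall u, vnorm2 u = 1 -> f u <= k) -> forall y, f y <= k * vnorm2 y.
Proof.
move=> fZ fk y; case: (vec_eq0_or_scaled_unit y) => [->|[s [u [s_gt0 u1 ->]]]].
  by have := fZ 0 0; rewrite scaler0 expr0n mul0r vnorm2_0 mulr0 => ->.
rewrite fZ vnorm2Z cabs2_real u1 mulr1 [k * _]mulrC ler_pM2l ?exprn_gt0 //.
exact: fk.
Qed.

Lemma inner_mulmxZ B (s : R) y :
  inner (B *m (s%:C *: y)) (s%:C *: y) = (s ^+ 2)%:C * inner (B *m y) y.
Proof. by rewrite -scalemxAr innerZl innerZr conjc_real mulrA -rmorphM expr2. Qed.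

End InnerProduct.

Lemma le_sqr_mul_of_quadratic_bound (R : realType) (k X V : R) :
  0 <= k -> 0 <= X -> 0 <= V ->
  (forall r, 2 * r * V <= k * (r ^+ 2 * X + V)) -> V <= k ^+ 2 * X.
Proof.
move=> k0 X0 V0 h.
have [kX_gt0|kX_le0] := ltrP 0 (k * X).
  have := h (V / (k * X)); set r := V / (k * X) => hr.
  have hrr : r * (k * X) = V by rewrite /r mulfVK // gt_eqF.
  have hV2 : V ^+ 2 <= k ^+ 2 * X * V by nra.
  have [V_gt0|] := ltrP 0 V; last by move=> ?; nra.
  nra.
have /eqP : k * X = 0 by apply/le_anti; rewrite kX_le0 mulr_ge0.
rewrite mulf_eq0 => /orP [/eqP k0'|/eqP X0'].
  by have := h 1; rewrite k0' mul0r; nra.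
by have := h (k + 1); rewrite X0'; nra.
Qed.

Lemma le_mul_of_quadratic_ge0 (R : realType) (a b Z : R) :
  0 <= a -> 0 <= b -> 0 <= Z ->
  (forall t, 0 <= a - 2 * t * Z + t ^+ 2 * Z * b) -> Z <= a * b.
Proof.
move=> a0 b0 Z0 h.
have [b_gt0|b_le0] := ltrP 0 b.
  have := mulr_ge0 (ltW b_gt0) (h b^-1).
  have -> : b * (a - 2 * b^-1 * Z + b^-1 ^+ 2 * Z * b) = a * b - Z.
    by field; rewrite gt_eqF.
  by rewrite subr_ge0.
have b_eq0 : b = 0 by apply/le_anti; rewrite b_le0 b0.
have [Z_gt0|] := ltrP 0 Z; last by move=> Zle; rewrite b_eq0 mulr0.
have := h ((a + 1) / (2 * Z)); rewrite b_eq0 mulr0 addr0.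
have -> : 2 * ((a + 1) / (2 * Z)) * Z = a + 1 by field; rewrite gt_eqF.
lra.
Qed.

Section SelfAdjoint.
Variables (R : realType) (n : nat).
Local Notation C := R[i].
Local Notation V := 'cV[C]_n.
Local Notation M := 'M[C]_n.
Implicit Types (x y u v z : V) (B P : M).

Definition selfadjoint B := forall x y, inner (B *m x) y = inner x (B *m y).

Lemma selfadjoint_formJ B x y :
  selfadjoint B -> inner (B *m y) x = conjc (inner (B *m x) y).
Proof. by move=> hB; rewrite hB innerJ. Qed.

Lemma selfadjoint_form_real B x :
  selfadjoint B -> inner (B *m x) x = (Re (inner (B *m x) x))%:C.
Proof.
move=> hB; apply: complexP => //=.
by have := congr1 Im (selfadjoint_formJ x x hB); rewrite ImJ; lra.
Qed.

Lemma psd_form_CS P u v : selfadjoint P -> (forall z, 0 <= Re (inner (P *m z) z)) ->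
  cabs2 (inner (P *m u) v) <= Re (inner (P *m u) u) * Re (inner (P *m v) v).
Proof.
move=> hP hpsd; set z := inner (P *m u) v.
set a := Re (inner (P *m u) u); set b := Re (inner (P *m v) v).
apply: le_mul_of_quadratic_ge0; rewrite ?cabs2_ge0 ?hpsd // => t.
have := hpsd (u - (t%:C * z) *: v).
rewrite mulmxBr -scalemxAr innerBl !innerBr !innerZl !innerZr.
rewrite (selfadjoint_formJ u v hP) -/z.
rewrite (selfadjoint_form_real u hP) (selfadjoint_form_real v hP) -/a -/b.
rewrite !conjcM conjc_real !ReImE /= /cabs2; lra.
Qed.

Lemma cauchy_schwarz u v : cabs2 (inner u v) <= vnorm2 u * vnorm2 v.
Proof.
have h1 : selfadjoint 1%:M by move=> x y; rewrite !mul1mx.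
have := psd_form_CS u v h1; rewrite !mul1mx; apply=> z.
by rewrite mul1mx; apply: vnorm2_ge0.
Qed.

Lemma Re_inner_sqr_le u v : Re (inner u v) ^+ 2 <= vnorm2 u * vnorm2 v.
Proof. by apply: le_trans (cauchy_schwarz u v); rewrite lerDl sqr_ge0. Qed.

Lemma cabs_inner_le u v :
  cabs (inner u v) <= vnorm u * vnorm v.
Proof.
rewrite /cabs -/(cabs2 _) -sqrtrM ?vnorm2_ge0 //.
exact/ler_wsqrtr/cauchy_schwarz.
Qed.

Lemma selfadjoint_polar B x y : selfadjoint B ->
  Re (inner (B *m (x + y)) (x + y)) - Re (inner (B *m (x - y)) (x - y)) =
  4 * Re (inner (B *m x) y).
Proof.
move=> hB; rewrite mulmxDr mulmxBr innerDl innerBl !innerBr !innerDr.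
by rewrite (selfadjoint_formJ x y hB) !ReImE; ring.
Qed.

Lemma vnorm2_parallelogram x y :
  vnorm2 (x + y) + vnorm2 (x - y) = 2 * (vnorm2 x + vnorm2 y).
Proof. by rewrite vnorm2D vnorm2B; ring. Qed.

Lemma selfadjoint_polarization B k : selfadjoint B -> 0 <= k ->
  (forall y, `|Re (inner (B *m y) y)| <= k * vnorm2 y) ->
  forall x, vnorm2 (B *m x) <= k ^+ 2 * vnorm2 x.
Proof.
move=> hB k0 hk x; set v := B *m x.
apply: le_sqr_mul_of_quadratic_bound k0 (vnorm2_ge0 x) (vnorm2_ge0 v) _ => r.
have := selfadjoint_polar (r%:C *: x) v hB.
rewrite -scalemxAr innerZl Re_realM -/v inner_xx /=.
have := vnorm2_parallelogram (r%:C *: x) v; rewrite vnorm2Z cabs2_real => par.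
have hpar : k * (vnorm2 (r%:C *: x + v) + vnorm2 (r%:C *: x - v)) =
            2 * (k * (r ^+ 2 * vnorm2 x + vnorm2 v)) by rewrite par; ring.
have := hk (r%:C *: x + v); have := hk (r%:C *: x - v).
rewrite !ler_norml => /andP[hm _] /andP[_ hp]; lra.
Qed.

End SelfAdjoint.

Lemma sup_le_ge0 (R : realType) (E : set R) (B : R) :
  0 <= B -> ubound E B -> sup E <= B.
Proof.
move=> B0 EB; have [->|/set0P E0] := eqVneq E set0; first by rewrite sup0.
exact: ge_sup.
Qed.

Lemma sup_ge0 (R : realType) (E : set R) :
  has_ubound E -> (forall y, E y -> 0 <= y) -> 0 <= sup E.
Proof.
move=> hE E_ge0; have [->|/set0P[x Ex]] := eqVneq E set0; first by rewrite sup0.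
exact: le_trans (E_ge0 x Ex) (ub_le_sup hE Ex).
Qed.

Section OperatorNorm.
Variables (R : realType) (n : nat).
Local Notation C := R[i].
Local Notation V := 'cV[C]_n.
Local Notation M := 'M[C]_n.
Implicit Types (x : V) (B : M).

Lemma vnorm2_mulmx_bounded B :
  exists2 k, 0 <= k & forall x, vnorm2 (B *m x) <= k * vnorm2 x.
Proof.
pose row_conj i : V := \col_j conjc (B i j).
exists (\sum_i vnorm2 (row_conj i)) => [|x]; first by rewrite sumr_ge0 // => i _; apply: vnorm2_ge0.
rewrite [vnorm2 (B *m x)]vnorm2E mulr_suml; apply: ler_sum => i _.
have -> : (B *m x) i 0 = inner x (row_conj i).
  by rewrite mxE /inner; apply: eq_bigr => j _; rewrite mxE conjcK mulrC.
by rewrite mulrC; apply: cauchy_schwarz.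
Qed.

Lemma opnorm_has_ubound B :
  has_ubound [set vnorm (B *m x) | x in [set x | vnorm x = 1]].
Proof.
have [k k0 hk] := vnorm2_mulmx_bounded B; exists (Num.sqrt k).
move=> _ [x /= /vnorm_eq1 x1 <-]; rewrite ler_sqrt //.
by have := hk x; rewrite x1 mulr1.
Qed.

Lemma vnorm_mulmx_le_opnorm B u :
  vnorm2 u = 1 -> vnorm (B *m u) <= opnorm B.
Proof.
by move=> u1; apply: (ub_le_sup (opnorm_has_ubound B)); exists u => //; apply/vnorm_eq1.
Qed.

Lemma opnorm_ge0 B : 0 <= opnorm B.
Proof. by apply: sup_ge0 (opnorm_has_ubound B) _ => _ [x _ <-]; apply: sqrtr_ge0. Qed.

Lemma vnorm2_mulmx_le B x : vnorm2 (B *m x) <= opnorm B ^+ 2 * vnorm2 x.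
Proof.
apply: (le_vnorm2_of_unit (f := fun x => vnorm2 (B *m x))) => [s y|u u1].
  by rewrite -scalemxAr vnorm2Z cabs2_real.
have := vnorm_mulmx_le_opnorm B u1.
rewrite -(sqr_sqrtr (vnorm2_ge0 (B *m u))) => h.
by rewrite lerXn2r ?nnegrE ?sqrtr_ge0 ?opnorm_ge0.
Qed.

Lemma opnorm_le B k : 0 <= k ->
  (forall x, vnorm2 (B *m x) <= k ^+ 2 * vnorm2 x) -> opnorm B <= k.
Proof.
move=> k0 hk; apply: sup_le_ge0 => // _ [x /= /vnorm_eq1 x1 <-].
rewrite -(ger0_norm k0) -sqrtr_sqr ler_sqrt ?sqr_ge0 //.
by have := hk x; rewrite x1 mulr1.
Qed.

End OperatorNorm.

Lemma le_of_sqr_le (R : realType) (x y : R) : 0 <= y -> x ^+ 2 <= y ^+ 2 -> x <= y.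
Proof. by move=> y0 h; nra. Qed.

Lemma cabs2B_le (R : realType) (z1 z2 : R[i]) (a1 b1 a2 b2 : R) :
  0 <= a1 -> 0 <= b1 -> 0 <= a2 -> 0 <= b2 ->
  cabs2 z1 <= a1 * b1 -> cabs2 z2 <= a2 * b2 ->
  cabs2 (z1 - z2) <= (a1 + a2) * (b1 + b2).
Proof.
rewrite /cabs2 ReB ImB; case: z1 z2 => [x1 y1] [x2 y2] /= a10 b10 a20 b20 h1 h2.
have dot : (x1 * x2 + y1 * y2) ^+ 2 <= (x1 ^+ 2 + y1 ^+ 2) * (x2 ^+ 2 + y2 ^+ 2).
  by have := sqr_ge0 (x1 * y2 - x2 * y1); nra.
have prod : (x1 ^+ 2 + y1 ^+ 2) * (x2 ^+ 2 + y2 ^+ 2) <= (a1 * b1) * (a2 * b2).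
  by apply: ler_pM => //; rewrite addr_ge0 ?sqr_ge0.
have cross : - 2 * (x1 * x2 + y1 * y2) <= a1 * b2 + a2 * b1.
  apply: le_of_sqr_le; first by rewrite addr_ge0 ?mulr_ge0.
  by have := sqr_ge0 (a1 * b2 - a2 * b1); nra.
nra.
Qed.


Lemma sector_ineq_small_mu (R : realType) (c s r mu a k I : R) :
  0 < c -> 0 <= s -> s ^+ 2 + c ^+ 2 = 1 -> 0 <= r -> 0 <= mu -> 0 <= k ->
  mu ^+ 2 <= a -> a <= mu * r -> c ^+ 2 * k <= s ^+ 2 * mu * r ->
  I ^+ 2 <= (a - mu ^+ 2) * k ->
  mu <= c ^+ 2 * r -> a + k + 2 * I <= (1 + 2 * s ^+ 2) * r ^+ 2.
Proof.
move=> c_gt0 s_ge0 sc1 r_ge0 mu_ge0 k_ge0 mu_a a_mu k_mu I_ak hmc.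
have c_le1 : c <= 1 by have s2 := sqr_ge0 s; nra.
have h1 : 2 * c * I <= c ^+ 2 * k + (a - mu ^+ 2).
  apply: le_of_sqr_le; first by nra.
  have := sqr_ge0 (c ^+ 2 * k - (a - mu ^+ 2)).
  have := ler_wpM2l (sqr_ge0 c) I_ak.
  nra.
(* c^2 (a + k + 2 I) <= mu (P - c mu) with P = (c^2 + c + (1 + c) s^2) r, and
   on mu <= c^2 r, mu (P - c mu) <= c^2 r P - c^5 r^2 = c^2 r^2 (1 + 2 c s^2). *)
have h2 : 0 <= (c ^+ 2 * r - mu) * ((c ^+ 2 + (1 + c) * s ^+ 2 + c) * r - c * (c ^+ 2 * r + mu)).
  apply: mulr_ge0; first by lra.
  have hc3 : c * c ^+ 2 <= c by rewrite ler_piMr //; nra.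
  have e1 : c * mu <= c * (c ^+ 2 * r) by apply: ler_wpM2l; lra.
  have e2 : 0 <= r * (c - c * c ^+ 2) by apply: mulr_ge0; lra.
  have e3 : 0 <= r * (c * s ^+ 2) by apply: mulr_ge0 => //; nra.
  have e4 : 0 <= r * (1 - c) by apply: mulr_ge0; lra.
  nra.
have h3 : c ^+ 2 * (a + k + 2 * I) <= c ^+ 2 * ((1 + 2 * s ^+ 2) * r ^+ 2).
  have p1 := ler_wpM2l (ltW c_gt0) h1.
  have p2 : c ^+ 2 * a <= c ^+ 2 * (mu * r) by apply: ler_wpM2l => //; apply: sqr_ge0.
  have p3 : c * (c ^+ 2 * k) <= c * (s ^+ 2 * mu * r) by apply: ler_wpM2l => //; lra.
  have p4 : c * a <= c * (mu * r) by apply: ler_wpM2l => //; lra.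
  have q1 : c ^+ 2 * r ^+ 2 * (s ^+ 2 + c ^+ 2) = c ^+ 2 * r ^+ 2 by rewrite sc1 mulr1.
  have q2 : c ^+ 3 * r ^+ 2 * (s ^+ 2 + c ^+ 2) = c ^+ 3 * r ^+ 2 by rewrite sc1 mulr1.
  have q3 : c * (c ^+ 2 * s ^+ 2 * r ^+ 2) <= 1 * (c ^+ 2 * s ^+ 2 * r ^+ 2).
    by apply: ler_wpM2r => //; apply: mulr_ge0; [apply: mulr_ge0|]; apply: sqr_ge0.
  move: p1 p2 p3 p4 q1 q2 q3 h2; rewrite ?exprSr ?expr1 ?expr0 ?mul1r => *.
  nra.
by rewrite ler_pM2l ?exprn_gt0 in h3.
Qed.

Lemma sector_ineq_large_mu (R : realType) (c s r mu a k I : R) :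
  s ^+ 2 + c ^+ 2 = 1 -> 0 <= r -> 0 <= mu -> 0 <= k -> mu ^+ 2 <= a ->
  a + k <= r ^+ 2 -> I ^+ 2 <= (a - mu ^+ 2) * k ->
  c ^+ 2 * r < mu -> a + k + 2 * I <= (1 + 2 * s ^+ 2) * r ^+ 2.
Proof.
move=> sc1 r_ge0 mu_ge0 k_ge0 mu_a ak_r I_ak hmc.
have h1 : 2 * I <= r ^+ 2 - mu ^+ 2.
  apply: le_of_sqr_le; first by nra.
  have : (a - mu ^+ 2) * k <= (a - mu ^+ 2) * (r ^+ 2 - a) by apply: ler_wpM2l; lra.
  have := sqr_ge0 ((a - mu ^+ 2) - (r ^+ 2 - a)).
  nra.
(* a + k + 2 I <= 2 r^2 - mu^2 <= (2 - c^4) r^2 <= (1 + 2 s^2) r^2 *)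
have m1 : (c ^+ 2 * r) * (c ^+ 2 * r) <= mu * mu.
  have cr_ge0 : 0 <= c ^+ 2 * r by rewrite mulr_ge0 ?sqr_ge0.
  by apply: ler_pM => //; apply: ltW.
have q1 : c ^+ 2 * r ^+ 2 * (s ^+ 2 + c ^+ 2) = c ^+ 2 * r ^+ 2 by rewrite sc1 mulr1.
have q2 : r ^+ 2 * (s ^+ 2 + c ^+ 2) = r ^+ 2 by rewrite sc1 mulr1.
have q3 : c ^+ 2 * (s ^+ 2 * r ^+ 2) <= 1 * (s ^+ 2 * r ^+ 2).
  by apply: ler_wpM2r; [apply: mulr_ge0; apply: sqr_ge0|nra].
move: m1 q1 q2 q3; rewrite ?exprSr ?expr1 ?expr0 ?mul1r => *.
nra.
Qed.

(* For a unit x: a = ||Hx||^2, k = ||Kx||^2, mu = <Hx,x>, I = Re <Hx, iKx>. *)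
Lemma sector_ineq (R : realType) (c s r mu a k I : R) :
  0 < c -> 0 <= s -> s ^+ 2 + c ^+ 2 = 1 -> 0 <= r -> 0 <= mu -> 0 <= k ->
  mu ^+ 2 <= a -> a <= mu * r -> c ^+ 2 * k <= s ^+ 2 * mu * r ->
  a + k <= r ^+ 2 -> I ^+ 2 <= (a - mu ^+ 2) * k ->
  a + k + 2 * I <= (1 + 2 * s ^+ 2) * r ^+ 2.
Proof.
move=> c_gt0 s_ge0 sc1 r_ge0 mu_ge0 k_ge0 mu_a a_mu k_mu ak_r I_ak.
have [|] := lerP mu (c ^+ 2 * r).
  exact: sector_ineq_small_mu c_gt0 s_ge0 sc1 r_ge0 mu_ge0 k_ge0 mu_a a_mu k_mu I_ak.
exact: sector_ineq_large_mu sc1 r_ge0 mu_ge0 k_ge0 mu_a ak_r I_ak.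
Qed.

Lemma le_of_sqr_le_mul (R : realType) (a b : R) : 0 <= b -> a ^+ 2 <= b * a -> a <= b.
Proof. by move=> b0 h; nra. Qed.

Lemma Re_form_le (R : realType) (n : nat) (B : 'M[R[i]]_n) (r : R) :
  0 <= r -> (forall v, vnorm2 (B *m v) <= r ^+ 2 * vnorm2 v) ->
  forall v, Re (inner (B *m v) v) <= r * vnorm2 v.
Proof.
move=> r0 hB v; apply: le_of_sqr_le; first by rewrite mulr_ge0 ?vnorm2_ge0.
apply: le_trans (Re_inner_sqr_le _ _) _.
by rewrite exprMn [vnorm2 v ^+ 2]expr2 mulrA ler_wpM2r ?vnorm2_ge0.
Qed.

Section SectorForms.
Variables (R : realType) (n : nat).
Local Notation C := R[i].
Local Notation V := 'cV[C]_n.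
Local Notation M := 'M[C]_n.
Implicit Types (x y u v z : V).

Variables (H K : M) (t : R).
Hypotheses (hH : selfadjoint H) (hK : selfadjoint K).
Hypothesis sectorHK : forall z, `|Re (inner (K *m z) z)| <= t * Re (inner (H *m z) z).

Lemma sector_CS u v :
  cabs2 (inner (K *m u) v) <= t ^+ 2 * Re (inner (H *m u) u) * Re (inner (H *m v) v).
Proof.
(* Cauchy-Schwarz for the positive forms t H + K and t H - K, whose difference is 2 K. *)
pose P (e : R) := t%:C *: H + e%:C *: K.
have innerP e x y : inner (P e *m x) y = t%:C * inner (H *m x) y + e%:C * inner (K *m x) y.
  by rewrite mulmxDl -!scalemxAl innerDl !innerZl.
have P_sa e : selfadjoint (P e).
  move=> x y; rewrite innerP /P mulmxDl -!scalemxAl innerDr !innerZr !conjc_real.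
  by rewrite hH hK.
have P_psd e : `|e| <= 1 -> forall z, 0 <= Re (inner (P e *m z) z).
  move=> e1 z; rewrite innerP ReD !Re_realM.
  have : `|e * Re (inner (K *m z) z)| <= t * Re (inner (H *m z) z).
    apply: le_trans (sectorHK z); rewrite normrM ler_piMl //.
  by rewrite ler_norml => /andP[+ _]; lra.
have CS e : `|e| <= 1 -> cabs2 (inner (P e *m u) v) <=
    Re (inner (P e *m u) u) * Re (inner (P e *m v) v).
  by move=> e1; apply: psd_form_CS; [apply: P_sa|apply: P_psd].
have n1 : `|1 : R| <= 1 by rewrite normr1.
have nN1 : `|-1 : R| <= 1 by rewrite normrN normr1.
have := cabs2B_le (P_psd _ n1 u) (P_psd _ n1 v) (P_psd _ nN1 u) (P_psd _ nN1 v)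
  (CS _ n1) (CS _ nN1).
rewrite !innerP !ReD !Re_realM.
have -> : forall a b : C, t%:C * a + 1%:C * b - (t%:C * a + (-1)%:C * b) = 2%:C * b.
  by move=> a b; apply: complexP; rewrite !ReImE /=; ring.
rewrite cabs2M cabs2_real; lra.
Qed.

Hypothesis H_psd : forall z, 0 <= Re (inner (H *m z) z).

Lemma vnorm2_HK_le_of_form (W : R) : 0 <= t -> 0 <= W ->
  (forall y, Re (inner (H *m y) y) <= W * vnorm2 y) ->
  forall x, vnorm2 (H *m x) + vnorm2 (K *m x) <= (1 + t ^+ 2) * W ^+ 2 * vnorm2 x.
Proof.
move=> t0 W0 HW x.
have Hx : vnorm2 (H *m x) <= W ^+ 2 * vnorm2 x.
  by apply: (selfadjoint_polarization hH W0) => y; rewrite ger0_norm ?H_psd ?HW.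
have Kx : vnorm2 (K *m x) <= (t * W) ^+ 2 * vnorm2 x.
  apply: (selfadjoint_polarization hK (mulr_ge0 t0 W0)) => y.
  by apply: le_trans (sectorHK y) _; rewrite -mulrA ler_wpM2l.
by rewrite exprMn in Kx; lra.
Qed.

Variable r : R.
Hypothesis r_ge0 : 0 <= r.
Hypothesis HK_le_r : forall v, vnorm2 (H *m v) + vnorm2 (K *m v) <= r ^+ 2 * vnorm2 v.

Let H_le_r v : Re (inner (H *m v) v) <= r * vnorm2 v.
Proof.
apply: Re_form_le r_ge0 _ v => {}v.
by apply: le_trans (HK_le_r v); rewrite lerDl vnorm2_ge0.
Qed.

Lemma vnorm2_H_le x : vnorm2 (H *m x) <= Re (inner (H *m x) x) * r.
Proof.
apply: le_of_sqr_le_mul; first by rewrite mulr_ge0.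
have := psd_form_CS x (H *m x) hH H_psd.
rewrite inner_xx cabs2_real => /le_trans; apply.
by rewrite -mulrA ler_wpM2l ?H_psd ?H_le_r.
Qed.

Lemma vnorm2_K_le x : vnorm2 (K *m x) <= t ^+ 2 * Re (inner (H *m x) x) * r.
Proof.
apply: le_of_sqr_le_mul; first exact: mulr_ge0 (mulr_ge0 (sqr_ge0 t) (H_psd x)) r_ge0.
have := sector_CS x (K *m x).
rewrite inner_xx cabs2_real => /le_trans; apply.
apply: le_trans (ler_wpM2l (mulr_ge0 (sqr_ge0 t) (H_psd x)) (H_le_r _)) _.
by rewrite mulrA.
Qed.

Lemma cross_term_sqr_le x : vnorm2 x = 1 ->
  Re (inner (H *m x) ('i *: (K *m x))) ^+ 2 <=
  (vnorm2 (H *m x) - Re (inner (H *m x) x) ^+ 2) * vnorm2 (K *m x).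
Proof.
move=> x1; set mu := Re (inner (H *m x) x).
have shift : Re (inner (H *m x - mu%:C *: x) ('i *: (K *m x))) =
             Re (inner (H *m x) ('i *: (K *m x))).
  rewrite innerBl ReB innerZl (innerZr _ (K *m x) x) -(innerJ (K *m x) x).
  by rewrite (selfadjoint_form_real x hK) conjc_real !ReImE /=; ring.
have := Re_inner_sqr_le (H *m x - mu%:C *: x) ('i *: (K *m x)).
rewrite shift vnorm2Z cabs2_i mul1r vnorm2B vnorm2Z cabs2_real x1 mulr1.
by rewrite innerZr conjc_real Re_realM -/mu; congr (_ <= _ * _); ring.
Qed.

Lemma vnorm2_cartesian_le (c s : R) x :
  0 < c -> 0 <= s -> s ^+ 2 + c ^+ 2 = 1 -> t * c = s -> vnorm2 x = 1 ->
  vnorm2 (H *m x + 'i *: (K *m x)) <= (1 + 2 * s ^+ 2) * r ^+ 2.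
Proof.
move=> c_gt0 s_ge0 sc1 tc x1.
rewrite vnorm2D vnorm2Z cabs2_i mul1r.
apply: sector_ineq c_gt0 s_ge0 sc1 r_ge0 (H_psd x) (vnorm2_ge0 _) _
  (vnorm2_H_le x) _ _ (cross_term_sqr_le x1).
- by have := Re_inner_sqr_le (H *m x) x; rewrite x1 mulr1.
- rewrite -tc; set mu := Re (inner (H *m x) x).
  have -> : (t * c) ^+ 2 * mu * r = c ^+ 2 * (t ^+ 2 * mu * r) by ring.
  by apply: ler_wpM2l; [exact: sqr_ge0|exact: vnorm2_K_le].
- by have := HK_le_r x; rewrite x1 mulr1.
Qed.

End SectorForms.

Section CartesianDecomposition.
Variables (R : realType) (n : nat).
Local Notation C := R[i].
Local Notation V := 'cV[C]_n.
Local Notation M := 'M[C]_n.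
Implicit Types (x : V).
Variable A : M.

Definition mxRe : M := (2^-1 : R)%:C *: (A + adjmx A).
Definition mxIm : M := ((2^-1 : R)%:C * - 'i) *: (A - adjmx A).

Lemma selfadjoint_mxRe : selfadjoint mxRe.
Proof.
move=> x y; rewrite -!scalemxAl !mulmxDl innerZl innerZr !innerDl !innerDr.
by rewrite conjc_real inner_adjmx inner_adjmxl addrC.
Qed.

Lemma selfadjoint_mxIm : selfadjoint mxIm.
Proof.
move=> x y; rewrite -!scalemxAl !mulmxBl innerZl innerZr !innerBl !innerBr.
rewrite inner_adjmx inner_adjmxl.
have -> : conjc ((2^-1 : R)%:C * - 'i) = - ((2^-1 : R)%:C * - 'i).
  by apply: complexP; rewrite !ReImE /=; ring.
ring.
Qed.

Lemma mulmx_mxRe_mxIm x : A *m x = mxRe *m x + 'i *: (mxIm *m x).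
Proof.
rewrite scalemxAl -mulmxDl; congr (_ *m _); apply/matrixP => i j; rewrite !mxE.
by apply: complexP; rewrite !ReImE /=; field.
Qed.

Lemma mulmx_adjmx_mxRe_mxIm x : adjmx A *m x = mxRe *m x - 'i *: (mxIm *m x).
Proof.
rewrite scalemxAl -mulmxBl; congr (_ *m _); apply/matrixP => i j; rewrite !mxE.
by apply: complexP; rewrite !ReImE /=; field.
Qed.

Lemma Re_form_mxRe x : Re (inner (mxRe *m x) x) = Re (inner (A *m x) x).
Proof.
rewrite -scalemxAl mulmxDl innerZl innerDl inner_adjmxl -(innerJ (A *m x)).
by rewrite !ReImE /=; lra.
Qed.

Lemma Re_form_mxIm x : Re (inner (mxIm *m x) x) = Im (inner (A *m x) x).
Proof.
rewrite -scalemxAl mulmxBl innerZl innerBl inner_adjmxl -(innerJ (A *m x)).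
by rewrite !ReImE /=; lra.
Qed.

Lemma selfadjoint_adjmx_sum : selfadjoint (adjmx A *m A + A *m adjmx A).
Proof.
move=> x y; rewrite !mulmxDl -!mulmxA !innerDl !innerDr.
rewrite (inner_adjmxl A (A *m x)) (inner_adjmx A (adjmx A *m x)).
by rewrite (inner_adjmx (adjmx A) x) (inner_adjmx A x) adjmxK addrC.
Qed.

Lemma Re_form_adjmx_sum x : Re (inner ((adjmx A *m A + A *m adjmx A) *m x) x) =
  2 * (vnorm2 (mxRe *m x) + vnorm2 (mxIm *m x)).
Proof.
rewrite mulmxDl -!mulmxA innerDl ReD.
rewrite (inner_adjmxl A (A *m x)) (inner_adjmx A (adjmx A *m x)).
rewrite -/(vnorm2 _) -/(vnorm2 _) mulmx_mxRe_mxIm mulmx_adjmx_mxRe_mxIm.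
by rewrite vnorm2_parallelogram vnorm2Z cabs2_i mul1r.
Qed.

Local Notation N := (opnorm (adjmx A *m A + A *m adjmx A)).

Lemma vnorm2_mxRe_mxIm_le_opnorm x :
  vnorm2 (mxRe *m x) + vnorm2 (mxIm *m x) <= N / 2 * vnorm2 x.
Proof.
have := Re_form_le (B := adjmx A *m A + A *m adjmx A) (opnorm_ge0 _) (vnorm2_mulmx_le _) x.
by rewrite Re_form_adjmx_sum mulrAC ler_pdivlMr // mulrC.
Qed.

Lemma opnorm_adjmx_sum_le (k : R) : 0 <= k ->
  (forall x, vnorm2 (mxRe *m x) + vnorm2 (mxIm *m x) <= k * vnorm2 x) -> N <= 2 * k.
Proof.
move=> k0 hk; have k2 : 0 <= 2 * k by rewrite mulr_ge0.
apply: opnorm_le k2 (selfadjoint_polarization selfadjoint_adjmx_sum k2 _) => y.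
rewrite Re_form_adjmx_sum ger0_norm ?mulr_ge0 ?addr_ge0 ?vnorm2_ge0 //.
by rewrite -mulrA ler_pM2l ?hk.
Qed.

Lemma cabs2_form_le x : vnorm2 x = 1 ->
  cabs2 (inner (A *m x) x) <= vnorm2 (mxRe *m x) + vnorm2 (mxIm *m x).
Proof.
move=> x1; rewrite /cabs2 -Re_form_mxRe -Re_form_mxIm.
by apply: lerD; rewrite -[X in _ <= X]mulr1 -x1 Re_inner_sqr_le.
Qed.

End CartesianDecomposition.

Section SectorialMatrix.
Variables (R : realType) (n : nat) (alpha : R) (A : 'M[R[i]]_n).
Hypothesis hA : A \in @Pi_s R n alpha.

Let form_sector u : vnorm2 u = 1 ->
  0 < Re (inner (A *m u) u) /\ `|Im (inner (A *m u) u)| <= tan alpha * Re (inner (A *m u) u).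
Proof. by move: hA; rewrite inE => hA' u1; apply: hA'; exists u => //; apply/vnorm_eq1. Qed.

Lemma Pi_s_Re_form_ge0 y : 0 <= Re (inner (A *m y) y).
Proof.
rewrite -oppr_le0 -(mul0r (vnorm2 y)).
apply: (le_vnorm2_of_unit (f := fun y => - Re (inner (A *m y) y))) => [s z|u u1].
  by rewrite inner_mulmxZ Re_realM mulrN.
by rewrite oppr_le0 ltW //; case: (form_sector u1).
Qed.

Lemma Pi_s_Im_form_le y : `|Im (inner (A *m y) y)| <= tan alpha * Re (inner (A *m y) y).
Proof.
rewrite -subr_le0 -(mul0r (vnorm2 y)).
apply: (le_vnorm2_of_unit
  (f := fun y => `|Im (inner (A *m y) y)| - tan alpha * Re (inner (A *m y) y))).
  move=> s z; rewrite inner_mulmxZ Re_realM Im_realM normrM ger0_norm ?sqr_ge0 //.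
  by rewrite mulrBr mulrCA.
by move=> u u1; rewrite subr_le0; case: (form_sector u1).
Qed.

End SectorialMatrix.

Section NumericalRadius.
Variables (R : realType) (n : nat) (q : R[i]) (A : 'M[R[i]]_n).
Local Notation C := R[i].
Local Notation V := 'cV[C]_n.
Implicit Types (x y : V).

Lemma wq_has_ubound : has_ubound [set r | exists x y : V,
  [/\ vnorm x = 1, vnorm y = 1, inner x y = q & r = cabs (inner (A *m x) y)]].
Proof.
exists (opnorm A) => _ [x [y [/vnorm_eq1 x1 y1 _ ->]]].
apply: le_trans (cabs_inner_le _ _) _; rewrite y1 mulr1.
exact: vnorm_mulmx_le_opnorm.
Qed.

Lemma cabs_form_le_wq x y : vnorm2 x = 1 -> vnorm2 y = 1 -> inner x y = q ->
  cabs (inner (A *m x) y) <= wq q A.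
Proof.
move=> x1 y1 xy; apply: (ub_le_sup wq_has_ubound).
by exists x, y; split=> //; apply/vnorm_eq1.
Qed.

Lemma wq_ge0 : 0 <= wq q A.
Proof. by apply: sup_ge0 wq_has_ubound _ => _ [x [y [_ _ _ ->]]]; apply: cabs_ge0. Qed.

Lemma wq_le (B : R) : 0 <= B ->
  (forall x y, vnorm2 x = 1 -> vnorm2 y = 1 -> inner x y = q -> cabs (inner (A *m x) y) <= B) ->
  wq q A <= B.
Proof.
move=> B0 hB; apply: sup_le_ge0 => // _ [x [y [/vnorm_eq1 x1 /vnorm_eq1 y1 xy ->]]].
exact: hB.
Qed.

End NumericalRadius.

Section OrthogonalVectors.
Variables (R : realType) (n : nat).
Local Notation C := R[i].
Local Notation V := 'cV[C]_n.
Implicit Types (x z : V).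

Lemma exists_coord_cabs2_lt1 x : (1 < n)%N -> vnorm2 x = 1 ->
  exists j : 'I_n, cabs2 (x j 0) < 1.
Proof.
move=> n_gt1 x1.
pose i0 : 'I_n := Ordinal (ltn_trans (ltnSn 0) n_gt1); pose i1 : 'I_n := Ordinal n_gt1.
have two_coords : cabs2 (x i0 0) + cabs2 (x i1 0) <= 1.
  rewrite -x1 vnorm2E (bigD1 i0) //= (bigD1 i1) //= addrA lerDl.
  by apply: sumr_ge0 => i _; apply: cabs2_ge0.
have [|x0_ge1] := ltrP (cabs2 (x i0 0)) 1; first by exists i0.
by exists i1; have := cabs2_ge0 (x i0 0); lra.
Qed.

Lemma exists_orthogonal_unit x : (1 < n)%N -> vnorm2 x = 1 ->
  exists z, inner x z = 0 /\ vnorm2 z = 1.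
Proof.
move=> n_gt1 x1; have [j xj_lt1] := exists_coord_cabs2_lt1 n_gt1 x1.
pose w := delta_mx j 0 - conjc (x j 0) *: x.
have inner_delta y : inner y (delta_mx j 0) = y j 0.
  rewrite /inner (bigD1 j) //= big1 => [|i ij]; last by rewrite mxE (negbTE ij) conjc_nat mulr0.
  by rewrite mxE !eqxx conjc_nat mulr1 addr0.
have xw : inner x w = 0.
  by rewrite innerBr innerZr inner_delta conjcK inner_xx x1 mulr1 subrr.
have w_ne0 : vnorm2 w != 0.
  rewrite vnorm2B vnorm2Z x1 cabs2J innerZr -innerJ inner_delta conjcK.
  rewrite /vnorm2 inner_delta mxE !eqxx /= /cabs2 !ReImE /=.
  by move: xj_lt1; rewrite /cabs2 => ?; apply/eqP; nra.
case: (vec_eq0_or_scaled_unit w) => [w0|[s [z [s_gt0 z1 wE]]]].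
  by move: w_ne0; rewrite w0 vnorm2_0 eqxx.
exists z; split=> //; apply/eqP.
move/eqP: xw; rewrite wE innerZr conjc_real mulf_eq0 => /orP[|//].
by rewrite (inj_eq (@complexI R)) gt_eqF.
Qed.

End OrthogonalVectors.

Section QNumericalRadiusBounds.
Variables (R : realType) (n : nat) (q : R[i]) (A : 'M[R[i]]_n).
Local Notation C := R[i].
Local Notation V := 'cV[C]_n.
Implicit Types (x y z : V).
Hypothesis q_le1 : cabs q <= 1.

Lemma exists_orthogonal_complement x : (1 < n)%N \/ cabs q = 1 -> vnorm2 x = 1 ->
  exists z, inner x z = 0 /\ vnorm2 z = 1 - cabs2 q.
Proof.
move=> [n_gt1|q1] x1; last first.
  by exists 0; rewrite inner0r vnorm2_0 -cabs_sqr q1 expr1n subrr.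
have [z [xz z1]] := exists_orthogonal_unit n_gt1 x1.
exists ((Num.sqrt (1 - cabs2 q))%:C *: z).
rewrite innerZr xz mulr0 vnorm2Z cabs2_real z1 mulr1 sqr_sqrtr // subr_ge0 -cabs_sqr.
by rewrite expr_le1 ?cabs_ge0.
Qed.

Lemma q_completion x z : vnorm2 x = 1 -> inner x z = 0 -> vnorm2 z = 1 - cabs2 q ->
  [/\ vnorm2 (conjc q *: x + z) = 1, inner x (conjc q *: x + z) = q
    & inner (A *m x) (conjc q *: x + z) = q * inner (A *m x) x + inner (A *m x) z].
Proof.
move=> x1 xz z1; rewrite vnorm2D vnorm2Z cabs2J x1 z1 innerZl xz mulr0 /=.
rewrite innerDr innerZr conjcK inner_xx x1 xz !innerDr !innerZr conjcK.
by split; [ring|rewrite addr0 mulr1|].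
Qed.

Lemma cabs_q_form_le_wq x : (1 < n)%N \/ cabs q = 1 -> vnorm2 x = 1 ->
  cabs q * cabs (inner (A *m x) x) <= wq q A.
Proof.
move=> hn x1; have [z [xz z1]] := exists_orthogonal_complement hn x1.
have [yp1 xyp Ayp] := q_completion x1 xz z1.
have xNz : inner x (- z) = 0 by rewrite innerNr xz oppr0.
have [ym1 xym Aym] := q_completion x1 xNz (etrans (vnorm2N z) z1).
have := cabs_form_le_wq A x1 yp1 xyp; have := cabs_form_le_wq A x1 ym1 xym.
rewrite Ayp Aym innerNr -cabsM.
set a := q * _; set b := inner _ z => hm hp.
have := cabsD (a + b) (a - b).
have -> : a + b + (a - b) = 2%:C * a by apply: complexP; rewrite !ReImE /=; ring.
by rewrite cabsM cabs_real ger0_norm //; lra.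
Qed.

Lemma cabs_form_le_split x y : vnorm2 x = 1 -> vnorm2 y = 1 -> inner x y = q ->
  cabs (inner (A *m x) y) <=
  cabs q * cabs (inner (A *m x) x) + Num.sqrt (1 - cabs2 q) * vnorm (A *m x).
Proof.
move=> x1 y1 xy.
have -> : inner (A *m x) y = q * inner (A *m x) x + inner (A *m x) (y - conjc q *: x).
  by rewrite innerBr innerZr conjcK addrC subrK.
apply: le_trans (cabsD _ _) _; rewrite cabsM lerD2l mulrC.
apply: le_trans (cabs_inner_le _ _) _; rewrite ler_wpM2l ?sqrtr_ge0 //.
rewrite /vnorm -/(vnorm2 _) vnorm2B vnorm2Z cabs2J x1 y1 innerZr conjcK.
by rewrite -innerJ xy ReM ReJ ImJ /cabs2; apply: ler_wsqrtr; lra.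
Qed.

End QNumericalRadiusBounds.

Section SectorialBounds.
Variables (R : realType) (n : nat) (alpha : R) (A : 'M[R[i]]_n) (q : R[i]).
Hypotheses (alpha_ge0 : 0 <= alpha) (alpha_lt : alpha < pi / 2).
Hypothesis hA : A \in @Pi_s R n alpha.
Hypothesis q_le1 : cabs q <= 1.
Local Notation H := (mxRe A).
Local Notation K := (mxIm A).
Local Notation N := (opnorm (adjmx A *m A + A *m adjmx A)).

Let cos_alpha_gt0 : 0 < cos alpha.
Proof.
apply: cos_gt0_pihalf; rewrite alpha_lt andbT (lt_le_trans _ alpha_ge0) //.
by rewrite oppr_lt0 divr_gt0 ?pi_gt0.
Qed.

Let sin_alpha_ge0 : 0 <= sin alpha.
Proof.
apply: sin_ge0_pi; rewrite alpha_ge0 (le_trans (ltW alpha_lt)) //.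
by rewrite ler_pdivrMr // ler_peMr ?ler1n ?pi_ge0.
Qed.

Let sin2Dcos2 : sin alpha ^+ 2 + cos alpha ^+ 2 = 1.
Proof. by rewrite addrC cos2Dsin2. Qed.

Let tanMcos : tan alpha * cos alpha = sin alpha.
Proof. by rewrite /tan divfK ?gt_eqF. Qed.

Let tan_alpha_ge0 : 0 <= tan alpha.
Proof. by rewrite /tan divr_ge0 // ltW. Qed.

Let H_psd z : 0 <= Re (inner (H *m z) z).
Proof. by rewrite Re_form_mxRe; apply: Pi_s_Re_form_ge0 hA z. Qed.

Let sectorHK z : `|Re (inner (K *m z) z)| <= tan alpha * Re (inner (H *m z) z).
Proof. by rewrite Re_form_mxRe Re_form_mxIm; apply: Pi_s_Im_form_le hA z. Qed.

Lemma wq_lower_bound : 0 < cabs q -> (1 < n)%N \/ cabs q = 1 ->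
  cabs q ^+ 2 * cos alpha ^+ 2 / 2 * N <= wq q A ^+ 2.
Proof.
move=> q_gt0 hn; set W := wq q A / cabs q.
have W_ge0 : 0 <= W by rewrite divr_ge0 ?wq_ge0 ?cabs_ge0.
have HW y : Re (inner (H *m y) y) <= W * vnorm2 y.
  apply: (le_vnorm2_of_unit (f := fun y => Re (inner (H *m y) y))) => [s z|u u1].
    by rewrite inner_mulmxZ Re_realM.
  rewrite Re_form_mxRe /W ler_pdivlMr //.
  apply: le_trans _ (cabs_q_form_le_wq A q_le1 hn u1).
  by rewrite mulrC ler_wpM2l ?cabs_ge0 ?Re_le_cabs.
have HK := vnorm2_HK_le_of_form (selfadjoint_mxRe A) (selfadjoint_mxIm A)
  sectorHK H_psd tan_alpha_ge0 W_ge0 HW.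
have N_le := opnorm_adjmx_sum_le (mulr_ge0 (addr_ge0 ler01 (sqr_ge0 _)) (sqr_ge0 _)) HK.
have -> : wq q A = W * cabs q by rewrite divfK ?gt_eqF.
have coef_ge0 : 0 <= cabs q ^+ 2 * cos alpha ^+ 2 / 2.
  by apply: divr_ge0 => //; apply: mulr_ge0; apply: sqr_ge0.
apply: le_trans (ler_wpM2l coef_ge0 N_le) _.
have -> : cabs q ^+ 2 * cos alpha ^+ 2 / 2 * (2 * ((1 + tan alpha ^+ 2) * W ^+ 2)) =
  (W * cabs q) ^+ 2 * (cos alpha ^+ 2 + (tan alpha * cos alpha) ^+ 2) by field.
by rewrite tanMcos addrC sin2Dcos2 mulr1.
Qed.

Lemma wq_upper_bound :
  wq q A ^+ 2 <=
  (Num.sqrt ((1 - cabs q ^+ 2) * (1 + 2 * sin alpha ^+ 2)) + cabs q) ^+ 2 * (N / 2).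
Proof.
set r := Num.sqrt (N / 2).
have r_ge0 : 0 <= r := sqrtr_ge0 _.
have r2 : r ^+ 2 = N / 2 by rewrite sqr_sqrtr // divr_ge0 ?opnorm_ge0.
have HK_le_r v : vnorm2 (H *m v) + vnorm2 (K *m v) <= r ^+ 2 * vnorm2 v.
  by rewrite r2; apply: vnorm2_mxRe_mxIm_le_opnorm.
have form_le x : vnorm2 x = 1 -> cabs (inner (A *m x) x) <= r.
  move=> x1; apply: le_of_sqr_le r_ge0 _; rewrite cabs_sqr.
  by apply: le_trans (cabs2_form_le A x1) _; have := HK_le_r x; rewrite x1 mulr1.
have Ax_le x : vnorm2 x = 1 -> vnorm (A *m x) <= Num.sqrt (1 + 2 * sin alpha ^+ 2) * r.
  move=> x1; rewrite /vnorm -/(vnorm2 _) -(ger0_norm r_ge0) -sqrtr_sqr -sqrtrM.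
    rewrite ler_wsqrtr // mulmx_mxRe_mxIm.
    exact: (vnorm2_cartesian_le (selfadjoint_mxRe A) (selfadjoint_mxIm A) sectorHK
      H_psd r_ge0 HK_le_r cos_alpha_gt0 sin_alpha_ge0 sin2Dcos2 tanMcos x1).
  by rewrite addr_ge0 ?mulr_ge0 ?sqr_ge0.
rewrite -r2 -exprMn lerXn2r ?nnegrE ?wq_ge0 ?mulr_ge0 ?addr_ge0 ?sqrtr_ge0 ?cabs_ge0 //.
apply: wq_le => [|x y x1 y1 xy]; first by rewrite mulr_ge0 ?addr_ge0 ?sqrtr_ge0 ?cabs_ge0.
apply: le_trans (cabs_form_le_split A x1 y1 xy) _.
rewrite cabs_sqr sqrtrM ?subr_ge0 -?cabs_sqr ?expr_le1 ?cabs_ge0 //.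
rewrite mulrDl addrC lerD ?ler_wpM2l ?cabs_ge0 ?form_le // -mulrA.
by rewrite ler_wpM2l ?sqrtr_ge0 ?Ax_le.
Qed.

End SectorialBounds.

Theorem theorem2p16 (R : realType) (n : nat) (alpha : R) (A : 'M[R[i]]_n)
    (q : R[i]) :
  0 <= alpha -> alpha < pi / 2 ->
  A \in @Pi_s R n alpha ->
  0 < cabs q -> cabs q <= 1 ->
  ((1 < n)%N \/ cabs q = 1) ->
  let N := opnorm (adjmx A *m A + A *m adjmx A) in
  cabs q ^+ 2 * cos alpha ^+ 2 / 2 * N <= wq q A ^+ 2 /\
  wq q A ^+ 2 <=
    (Num.sqrt ((1 - cabs q ^+ 2) * (1 + 2 * sin alpha ^+ 2)) + cabs q) ^+ 2 * (N / 2).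
Proof.
move=> alpha_ge0 alpha_lt hA q_gt0 q_le1 hn N; split.
  exact: wq_lower_bound.
exact: wq_upper_bound.
Qed.
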